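(* There is no function $g:\mathbb{N}\to\mathbb{N}$ such that $\operatorname{dbw}(H)\le g(\operatorname{dbw}(J))$ for every digraph $J$ and every directed topological minor $H$ of $J$.
   Context: All digraphs are finite and loopless. Contracting an edge $\vec{xy}$ of $D$ removes $\vec{xy}$, $x$, $y$ and adds a new vertex with in-neighbourhood $(N^-(x)\cup N^-(y))\setminus\{x,y\}$ and out-neighbourhood $(N^+(x)\cup N^+(y))\setminus\{x,y\}$. Let $V_3(D)$ be the set of vertices incident with at least three edges. An edge $\vec{xy}$ is 2-contractible in $D$ if $\{x,y\}\not\subseteq V_3(D)$ and either $\vec{yx}\in E(D)$ or there is no pair $(w,z)$ of vertices of $V_3(D)$ (possibly $w=z$) such that $x$ can reach $w$ and $z$ can reach $y$ by directed paths in $D-\vec{xy}$. $H$ is a directed topological minor of $D$ if $H$ is obtained from a subgraph of $D$ by a sequence of contractions of 2-contractible edges. Directed branch-width: for $X\subseteq E(D)$, $S^V_X=\{y: \exists x,z,\ \vec{xy}\in E(D)\setminus X,\ \vec{yz}\in X\}$; $\operatorname{dbw}(D)$ is the minimum over $(T,\beta)$ ($T$ a tree of maximum degree at most three, $\beta$ a bijection from leaves onto $E(D)$) of the maximum over tree edges of $|S^V_{\beta(Y)}\cup S^V_{E(D)\setminus\beta(Y)}|$, $Y$ the leaves on one side (0 if no tree edges). *)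

From Stdlib Require Import ClassicalEpsilon.
From mathcomp Require Import all_boot.
Set Implicit Arguments. Unset Strict Implicit. Unset Printing Implicit Defensive.

Record digraph (T : finType) := Digraph { dv : {set T}; de : {set T * T} }.

Definition wf (T : finType) (D : digraph T) : bool :=
  (de D \subset setX (dv D) (dv D)) && [forall v, (v, v) \notin de D].

Definition subgraph (T : finType) (D0 D : digraph T) : bool :=
  [&& wf D0, dv D0 \subset dv D & de D0 \subset de D].

(* contraction of the arc xy: the merged vertex is represented by x;
   its in/out-neighbourhoods are the unions, minus {x,y}. *)
Definition contract (T : finType) (D : digraph T) (x y : T) : digraph T :=
  let f := fun v => if v == y then x else v in
  Digraph (dv D :\ y)
          [set (f p.1, f p.2) | p in [set p in de D | f p.1 != f p.2]].

Definition V3 (T : finType) (D : digraph T) : {set T} :=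
  [set v in dv D | 2 < #|[set p in de D | (p.1 == v) || (p.2 == v)]|].

Definition arc_minus (T : finType) (D : digraph T) (x y : T) : rel T :=
  fun u v => ((u, v) \in de D) && ((u, v) != (x, y)).

Definition two_contractible (T : finType) (D : digraph T) (x y : T) : bool :=
  ~~ ((x \in V3 D) && (y \in V3 D)) &&
  (((y, x) \in de D) ||
   ~~ [exists w, exists z,
        [&& w \in V3 D, z \in V3 D,
            connect (arc_minus D x y) x w & connect (arc_minus D x y) z y]]).

Inductive contracts_to (T : finType) : digraph T -> digraph T -> Prop :=
| ct_refl D : contracts_to D D
| ct_step D x y D' : (x, y) \in de D -> two_contractible D x y ->
    contracts_to (contract D x y) D' -> contracts_to D D'.

Definition isomorphic (T' T : finType) (H : digraph T') (D : digraph T) : Prop :=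
  exists f : T' -> T,
    [/\ {in dv H &, injective f}, f @: dv H = dv D &
        {in dv H &, forall u v, ((u, v) \in de H) = ((f u, f v) \in de D)}].

Definition dtop_minor (T' T : finType) (H : digraph T') (J : digraph T) : Prop :=
  exists D0 D1 : digraph T, subgraph D0 J /\ contracts_to D0 D1 /\ isomorphic H D1.

Definition SV (T : finType) (E X : {set T * T}) : {set T} :=
  [set v | [exists u, exists w, ((u, v) \in E :\: X) && ((v, w) \in X)]].

Definition is_subcubic_tree (U : finType) (t : rel U) : Prop :=
  [/\ symmetric t, irreflexive t,
      (forall a b, connect t a b),
      (forall a b, t a b ->
         ~~ connect (fun u v => t u v && ~~ (((u == a) && (v == b)) || ((u == b) && (v == a)))) a b)
    & (forall u, #|[set v | t u v]| <= 3)].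

Definition leaves (U : finType) (t : rel U) : {set U} :=
  [set u | #|[set v | t u v]| <= 1].

(* leaves on the side of a when the tree edge ab is removed *)
Definition side (U : finType) (t : rel U) (a b : U) : {set U} :=
  [set u in leaves t |
    connect (fun u v => t u v && ~~ (((u == a) && (v == b)) || ((u == b) && (v == a)))) a u].

Definition dbw_le (T : finType) (D : digraph T) (k : nat) : Prop :=
  de D = set0 \/
  exists (U : finType) (t : rel U) (beta : U -> T * T),
    [/\ is_subcubic_tree t, {in leaves t &, injective beta},
        beta @: leaves t = de D &
        forall a b, t a b ->
          let X := beta @: side t a b in
          #|SV (de D) X :|: SV (de D) (de D :\: X)| <= k].

Definition dbw (T : finType) (D : digraph T) : nat :=
  epsilon (inhabits 0%N)
    (fun k => dbw_le D k /\ forall j, dbw_le D j -> (k <= j)%N).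

(* For n : nat we use a six-kind digraph on vertices (k, i), k in
   {A, Y, W, B, X, V}, i < n, parameterised by two index sets S and R that
   record which of the arcs A_i Y_i and X_i B_i have been contracted
   ([gadget S R]).  The digraph J = gadget {} {} has arcs A_i -> B_j,
   A_i -> Y_i, W_i -> Y_i, X_i -> B_i, X_i -> V_i: no vertex is both a head
   and a tail, so no cut has a boundary and dbw J = 0.  Each arc A_i Y_i and
   X_i B_i is 2-contractible (its ends and their neighbourhoods have degree
   at most two), and contracting them all yields H = gadget [set: _] [set: _]
   with arcs W_i -> A_i, A_i -> X_j (all i, j) and X_j -> V_j.  In H the
   boundary of a cut either contains n vertices or squares to more than the
   number of arcs on one side (H_cut); a balanced edge of the decomposition
   tree (balanced_edge) then forces dbw H > K once n >= 2K + 2. *)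

From HB Require Import structures.
From Stdlib Require Import ClassicalEpsilon Classical.
From mathcomp Require Import all_boot zify.
Set Implicit Arguments. Unset Strict Implicit. Unset Printing Implicit Defensive.

Lemma least_witness (P : nat -> Prop) k0 :
  P k0 -> exists k, P k /\ forall j, P j -> k <= j.
Proof.
elim/ltn_ind: k0 => k IH Pk.
have [[j [lt_jk Pj]] | no_smaller] := classic (exists j, j < k /\ P j).
  exact: IH lt_jk Pj.
exists k; split=> // j Pj; rewrite leqNgt; apply/negP => lt_jk.
by apply: no_smaller; exists j.
Qed.

Lemma dbw_least (T : finType) (D : digraph T) k0 : dbw_le D k0 ->
  dbw_le D (dbw D) /\ forall j, dbw_le D j -> dbw D <= j.
Proof. by move=> /least_witness ex; exact: (epsilon_spec (inhabits 0) _ ex). Qed.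

Lemma connect_fwd (T : finType) (e : rel T) (Q : pred T) x y :
  (forall u v, e u v -> Q u -> Q v) -> connect e x y -> Q x -> Q y.
Proof.
move=> eQ /connectP[p pp ->]; elim: p x pp => //= z p IH x /andP[exz pz] Qx.
by apply: IH => //; apply: eQ exz Qx.
Qed.

Lemma connect_bwd (T : finType) (e : rel T) (Q : pred T) x y :
  (forall u v, e u v -> Q v -> Q u) -> connect e x y -> Q y -> Q x.
Proof.
move=> eQ /connectP[p pp ->]; elim: p x pp => //= z p IH x /andP[exz pz] Qy.
by apply: eQ exz _; apply: IH.
Qed.

Lemma card_bigcup_le (I T : finType) (P : pred I) (F : I -> {set T}) :
  #|\bigcup_(i | P i) F i| <= \sum_(i | P i) #|F i|.
Proof.
elim/big_rec2: _ => [|i n S _ IH]; first by rewrite cards0.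
by rewrite (leq_trans (leq_card_setU _ _)) // leq_add2l.
Qed.

Section SubcubicTree.
Variables (U : finType) (t : rel U).
Hypothesis t_tree : is_subcubic_tree t.

Definition avoid (a b : U) : rel U :=
  fun u v => t u v && ~~ (((u == a) && (v == b)) || ((u == b) && (v == a))).

Definition branch (a b : U) : {set U} := [set u | connect (avoid a b) a u].

Lemma t_sym : symmetric t. Proof. by case: t_tree. Qed.
Lemma t_irr : irreflexive t. Proof. by case: t_tree. Qed.

Lemma avoidC a b : avoid a b =2 avoid b a.
Proof. by move=> u v; rewrite /avoid orbC. Qed.

Lemma avoid_sym a b : symmetric (avoid a b).
Proof.
move=> u v; rewrite /avoid t_sym; congr (_ && ~~ _).
by rewrite orbC; case: (u == a) (v == b) (u == b) (v == a) => [] [] [] [].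
Qed.

Lemma connect_avoidC a b u v : connect (avoid a b) u v = connect (avoid a b) v u.
Proof. exact: (sym_connect_sym (avoid_sym a b)). Qed.

Lemma edge_cut a b : t a b -> ~~ connect (avoid a b) a b.
Proof. by case: t_tree => _ _ _ cut _ /cut. Qed.

Lemma in_side a b u :
  (u \in side t a b) = (u \in leaves t) && connect (avoid a b) a u.
Proof. by rewrite inE. Qed.

Lemma first_step c u : connect t c u -> u != c ->
  exists2 d, t c d & connect (avoid d c) d u.
Proof.
move=> /connectP[p pp ->] u_neq_c.
case: (shortenP pp) u_neq_c => [[|d p'] pp' up' _] //=; first by rewrite eqxx.
move=> _; case/andP: pp' => tcd pp'; exists d => //.
apply/connectP; exists p' => //.
have c_notin : c \notin d :: p' by case/andP: up'.
apply: (@sub_in_path _ (predC1 c) t); last by [].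
  move=> x y; rewrite !inE => xc yc txy.
  by rewrite /avoid txy (negbTE xc) (negbTE yc) /= !andbF.
by apply/allP => x xin; rewrite inE; apply/eqP => xc; rewrite -xc xin in c_notin.
Qed.

Lemma leaves_cover c : leaves t \subset c |: \bigcup_(d | t c d) side t d c.
Proof.
apply/subsetP => u ul; rewrite !inE; case: eqP => //= /eqP u_neq_c.
case: t_tree => _ _ conn _ _.
have [d tcd cdu] := first_step (conn c u) u_neq_c.
by apply/bigcupP; exists d => //; rewrite in_side ul.
Qed.

Lemma sides_disjoint a b : t a b -> [disjoint side t a b & side t b a].
Proof.
move=> tab; apply/pred0P => u /=; apply/negP => /andP [].
rewrite !in_side => /andP[_ au] /andP[_ bu].
have := edge_cut tab; rewrite (connect_trans au) //.
by rewrite connect_avoidC (eq_connect (avoidC a b) b u).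
Qed.

Lemma side_complement a b : t a b ->
  #|side t b a| <= #|leaves t| - #|side t a b|.
Proof.
move=> tab; rewrite leq_subRL; last first.
  by apply: subset_leq_card; apply/subsetP => u; rewrite in_side => /andP[].
have := sides_disjoint tab; rewrite -leq_card_setU => /eqP <-.
by apply: subset_leq_card; apply/subsetP => u; rewrite !inE => /orP[] /andP[].
Qed.

Lemma branch_proper b c d :
  t b c -> t c d -> d != b -> branch d c \proper branch c b.
Proof.
move=> tbc tcd d_neq_b.
have c_unreached p : path (avoid d c) d p -> c \notin d :: p.
  move=> pp; apply/negP => cin.
  have := edge_cut tcd; rewrite connect_avoidC (eq_connect (avoidC c d)).
  by rewrite (path_connect pp cin).
have b_neq_c : b != c by apply/eqP => E; move: tbc; rewrite E t_irr.
apply/properP; split.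
  apply/subsetP => u; rewrite !inE => /connectP [p pp ->].
  apply: (connect_trans (y := d)).
    apply: connect1; rewrite /avoid tcd /= (negbTE d_neq_b) (eq_sym c b).
    by rewrite (negbTE b_neq_c) /= andbF.
  apply/connectP; exists p => //.
  apply: (@sub_in_path _ (predC1 c) (avoid d c)); last by [].
    move=> x y; rewrite !inE => xc yc /andP[txy _].
    by rewrite /avoid txy (negbTE xc) (negbTE yc) /= !andbF.
  apply/allP => x xin; rewrite inE; apply/eqP => xc.
  by have := c_unreached p pp; rewrite -xc xin.
exists c; first by rewrite inE connect0.
rewrite inE; apply/negP => dc.
by have := edge_cut tcd; rewrite connect_avoidC (eq_connect (avoidC c d)) dc.
Qed.

(* If every branch at c carries at most c0 leaves, there are at most
   3 c0 + 1 leaves, since c has at most three neighbours. *)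
Lemma cover_bound c c0 :
  (forall d, t c d -> #|side t d c| <= c0) -> #|leaves t| <= 3 * c0 + 1.
Proof.
move=> small.
have deg_c : #|(fun d => t c d)| <= 3 by case: t_tree => _ _ _ _ /(_ c); rewrite cardsE.
rewrite (leq_trans (subset_leq_card (leaves_cover c))) //.
rewrite (leq_trans (leq_card_setU _ _)) // cards1 addnC leq_add2r.
have sum_small : \sum_(d | t c d) #|side t d c| <= \sum_(d | t c d) c0.
  by apply: leq_sum.
rewrite (leq_trans (card_bigcup_le _ _)) // (leq_trans sum_small) //.
by rewrite sum_nat_const leq_mul2r deg_c orbT.
Qed.

Lemma balanced_edge c0 : 3 * c0 + 1 < #|leaves t| ->
  exists a b, [/\ t a b, c0 < #|side t a b| & c0 < #|leaves t| - #|side t a b|].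
Proof.
move=> many.
pose big := [pred bc : U * U | t bc.1 bc.2 && (c0 < #|side t bc.2 bc.1|)].
have [bc0 big_bc0] : exists bc, big bc.
  have [u0 _] : exists u, u \in leaves t.
    by apply/set0Pn; rewrite -card_gt0 (leq_trans _ many).
  apply/existsP; apply: contraTT many => /existsPn none; rewrite -leqNgt.
  by apply: (@cover_bound u0) => d tu0d; have := none (u0, d); rewrite /= tu0d -leqNgt.
have [[b c] /andP[/= tbc big_c] min_bc] := arg_minnP (fun bc => #|branch bc.2 bc.1|) big_bc0.
have tcb : t c b by rewrite t_sym.
have big_b : c0 < #|side t b c|.
  rewrite ltnNge; apply: contraTN many => small_b; rewrite -leqNgt.
  apply: (@cover_bound c) => d tcd; have [->//|d_neq_b] := eqVneq d b.
  rewrite leqNgt; apply/negP => big_d.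
  have := min_bc (c, d); rewrite /= tcd big_d => /(_ isT); apply/negP.
  by rewrite -ltnNge; apply: proper_card; apply: branch_proper.
by exists c, b; split => //; apply: leq_trans big_b (side_complement tcb).
Qed.

End SubcubicTree.

Section Caterpillar.
(* The caterpillar with spine inl 0 - inl 1 - ... - inl (m-1) and one pendant
   leaf inr k at every spine vertex inl k; its leaves are exactly the inr k. *)
Variable m : nat.
Hypothesis m_gt1 : 1 < m.

Definition cat_vertex : Type := 'I_m + 'I_m.

Definition idx (u : cat_vertex) : nat := match u with inl k => k | inr k => k end.

Definition cat : rel cat_vertex := fun u v =>
  match u, v with
  | inl k, inl l => (k.+1 == l :> nat) || (l.+1 == k :> nat)
  | inl k, inr l | inr l, inl k => k == l
  | inr _, inr _ => false
  end.

Lemma ord_eqE n (p k : 'I_n) : (p == k) = (nat_of_ord p == nat_of_ord k).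
Proof. by []. Qed.

Lemma eq_inl (p k : 'I_m) : (inl p == inl k :> cat_vertex) = (p == k).
Proof. by apply/eqP/eqP => [[]|->]. Qed.
Lemma eq_inr (p k : 'I_m) : (inr p == inr k :> cat_vertex) = (p == k).
Proof. by apply/eqP/eqP => [[]|->]. Qed.

Lemma cat_sym : symmetric cat.
Proof. by case=> k [] l; rewrite /cat 1?orbC 1?eq_sym. Qed.

Lemma cat_irr : irreflexive cat.
Proof. by case=> k; rewrite /cat //; apply/negP => /orP[] /eqP; lia. Qed.

Lemma cat_connected a b : connect cat a b.
Proof.
have m_gt0 : 0 < m by lia.
have spine k (lt_km : k < m) : connect cat (inl (Ordinal m_gt0)) (inl (Ordinal lt_km)).
  elim: k lt_km => [|k IH] lt_km.
    by rewrite (@eq_connect0 _ _ _ (inl (Ordinal lt_km))) //; congr inl; apply: val_inj.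
  have lt_k : k < m by lia.
  by apply: connect_trans (IH lt_k) _; apply: connect1 => /=; rewrite eqxx.
have from0 u : connect cat (inl (Ordinal m_gt0)) u.
  case: u => [[k lt_km]|[k lt_km]]; first exact: spine.
  by apply: connect_trans (spine k lt_km) _; apply: connect1 => /=; rewrite eqxx.
by apply: connect_trans (from0 b); rewrite (sym_connect_sym cat_sym).
Qed.

(* Deleting a spine edge separates low from high indices; deleting a pendant
   edge isolates the pendant leaf. *)
Lemma cat_edge_cut a b : cat a b ->
  ~~ connect (fun u v => cat u v && ~~ (((u == a) && (v == b)) || ((u == b) && (v == a)))) a b.
Proof.
case: a => k; case: b => l; rewrite /cat // => tab; apply/negP => C.
- case/orP: tab => /eqP kl.
  + suff : idx (inl l : cat_vertex) <= k by rewrite /idx; lia.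
    apply: (@connect_fwd _ _ (fun u => idx u <= k) _ _ _ C); last by rewrite /idx.
    by move=> [p|p] [q|q] /=; rewrite ?eq_inl ?eq_inr ?ord_eqE //; lia.
  + suff : k <= idx (inl l : cat_vertex) by rewrite /idx; lia.
    apply: (@connect_fwd _ _ (fun u => k <= idx u) _ _ _ C); last by rewrite /idx.
    by move=> [p|p] [q|q] /=; rewrite ?eq_inl ?eq_inr ?ord_eqE //; lia.
- suff : inr l != inr l :> cat_vertex by rewrite eqxx.
  apply: (@connect_fwd _ _ (fun u => u != inr l) _ _ _ C); last by [].
  move=> [p|p] [q|q] /=; rewrite ?eq_inl ?eq_inr ?ord_eqE //.
  by move: tab; rewrite ord_eqE; lia.
- suff : inl l == inr k :> cat_vertex by [].
  apply: (@connect_fwd _ _ (fun u => u == inr k) _ _ _ C); last by rewrite eqxx.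
  move=> [p|p] [q|q] /=; rewrite ?eq_inl ?eq_inr ?ord_eqE //.
  by move: tab; rewrite ord_eqE; lia.
Qed.

(* The neighbours of a vertex inl k are inl k.-1, inl k.+1 and inr k, told
   apart by the value of [nbr_tag k]. *)
Definition nbr_tag (k : nat) (v : cat_vertex) : 'I_3 :=
  match v with
  | inr _ => ord0
  | inl q => if k < q then @Ordinal 3 1 isT else @Ordinal 3 2 isT
  end.

Lemma cat_degree u : #|[set v | cat u v]| <= 3.
Proof.
rewrite -(@card_in_imset _ _ (nbr_tag (idx u))).
  by rewrite (leq_trans (max_card _)) ?card_ord.
move=> v1 v2; rewrite !inE; case: u => k; case: v1 => p; case: v2 => q;
  rewrite /cat /nbr_tag /idx // => c1 c2.
- case: (ltnP k p) => kp; case: (ltnP k q) => kq => /(congr1 val) /= E;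
    by congr inl; apply: ord_inj; move: c1 c2; lia.
- by case: ifP.
- by case: ifP.
- by move=> _; rewrite -(eqP c1) -(eqP c2).
- by move=> _; rewrite (eqP c1) (eqP c2).
Qed.

Lemma cat_leaves u : (u \in leaves cat) = (if u is inr _ then true else false).
Proof.
rewrite inE; case: u => k.
- have [q kq] : exists q : 'I_m, (k.+1 == q :> nat) || (q.+1 == k :> nat).
    case: (ltnP k.+1 m) => lt_k1m; first by exists (Ordinal lt_k1m); rewrite eqxx.
    have lt_pred : k.-1 < m by have := ltn_ord k; lia.
    by exists (Ordinal lt_pred); apply/orP; right => /=; apply/eqP; lia.
  apply/negbTE; rewrite -ltnNge.
  have -> : 2 = #|[set (inr k : cat_vertex); inl q]| by rewrite cards2.
  apply: subset_leq_card; apply/subsetP => v; rewrite !inE => /orP[] /eqP ->;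
    rewrite /cat //=; exact: eqxx.
- rewrite (leq_trans (subset_leq_card (B := [set (inl k : cat_vertex)]) _)) ?cards1 //.
  by apply/subsetP => v; rewrite !inE; case: v => q; rewrite /cat.
Qed.

Lemma cat_tree : is_subcubic_tree cat.
Proof.
split; [exact: cat_sym | exact: cat_irr | exact: cat_connected
       | exact: cat_edge_cut | exact: cat_degree].
Qed.

End Caterpillar.

Lemma caterpillar (X : finType) (E : {set X}) : 1 < #|E| ->
  exists (U : finType) (t : rel U) (beta : U -> X),
    [/\ is_subcubic_tree t, {in leaves t &, injective beta} & beta @: leaves t = E].
Proof.
move=> E_gt1.
have [x0 _] : exists x, x \in E by apply/set0Pn; rewrite -card_gt0 ltnW.
exists (cat_vertex #|E|), (@cat #|E|), (fun u => nth x0 (enum E) (idx u)).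
split; first exact: cat_tree.
- move=> [p|p] [q|q]; rewrite !cat_leaves // => _ _ same.
  congr inr; apply: val_inj => /=; apply/eqP.
  by move: same => /eqP; rewrite nth_uniq ?enum_uniq // -?cardE ?ltn_ord.
- apply/setP => e; apply/imsetP/idP => [[u _ ->]|eE].
    by rewrite -mem_enum mem_nth // -cardE /idx; case: u => k; exact: ltn_ord.
  have lt_e : index e (enum E) < #|E| by rewrite cardE index_mem mem_enum.
  exists (inr (Ordinal lt_e) : cat_vertex #|E|); first by rewrite cat_leaves.
  by rewrite /idx /= nth_index // mem_enum.
Qed.

Lemma dbw_le_all_cuts (T : finType) (D : digraph T) (k : nat) : 1 < #|de D| ->
  (forall Y : {set T * T}, Y \subset de D -> #|SV (de D) Y :|: SV (de D) (de D :\: Y)| <= k) ->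
  dbw_le D k.
Proof.
move=> arcs_gt1 cuts; right.
have [U [t [beta [tree inj onto]]]] := caterpillar arcs_gt1.
exists U, t, beta; split => // a b _ /=; apply: cuts.
by rewrite -onto; apply: imsetS; apply/subsetP => u; rewrite inE => /andP[].
Qed.

Lemma dbw_spec (T : finType) (D : digraph T) : 1 < #|de D| ->
  dbw_le D (dbw D) /\ forall j, dbw_le D j -> dbw D <= j.
Proof.
move=> arcs_gt1; apply: (@dbw_least _ _ #|T|).
by apply: dbw_le_all_cuts => // Y _; exact: max_card.
Qed.

Lemma SV_no_2path (T : finType) (E Y : {set T * T}) :
  (forall u v w, (u, v) \in E -> (v, w) \in E -> False) -> Y \subset E -> SV E Y = set0.
Proof.
move=> no2 sub; apply/setP => v; rewrite !inE; apply/negbTE/existsPn => u.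
apply/existsPn => w; rewrite in_setD; apply/negP => /andP[/andP[_ uv] vw].
exact: no2 uv (subsetP sub _ vw).
Qed.

Lemma dbw_no_2path (T : finType) (D : digraph T) : 1 < #|de D| ->
  (forall u v w, (u, v) \in de D -> (v, w) \in de D -> False) -> dbw D = 0.
Proof.
move=> arcs_gt1 no2; have [_ least] := dbw_spec arcs_gt1.
apply/eqP; rewrite -leqn0; apply: least; apply: dbw_le_all_cuts => // Y sub.
by rewrite !SV_no_2path ?setU0 ?cards0 // subsetDl.
Qed.

Lemma boundary_uniform (T : finType) (E Y : {set T * T}) u v w :
  (u, v) \in E -> (v, w) \in E -> v \notin SV E Y :|: SV E (E :\: Y) ->
  ((u, v) \in Y) = ((v, w) \in Y).
Proof.
move=> uv vw; rewrite !inE negb_or => /andP[/existsPn noY /existsPn noEY].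
apply/idP/idP => [uvY|vwY]; apply/negPn/negP => notY.
- by have /existsPn/(_ w) := noEY u; rewrite !in_setD uvY notY uv vw.
- by have /existsPn/(_ w) := noY u; rewrite !in_setD notY uv vwY.
Qed.

Lemma ct_trans (T : finType) (D1 D2 D3 : digraph T) :
  contracts_to D1 D2 -> contracts_to D2 D3 -> contracts_to D1 D3.
Proof. by elim=> // D x y D' xy tc _ IH /IH; exact: ct_step. Qed.

Lemma cardsC_setU1 (I : finType) (S : {set I}) i k :
  i \notin S -> #|~: S| = k.+1 -> #|~: (i |: S)| = k.
Proof.
move=> iS cardS; have := cardsD1 i (~: S); rewrite cardS inE iS add1n => [[->]].
by apply: eq_card => x; rewrite !inE negb_or andbC.
Qed.

Lemma contracts_to_full (T I : finType) (F : {set I} -> digraph T) :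
  (forall (S : {set I}) (i : I), i \notin S -> exists x y : T,
     [/\ (x, y) \in de (F S), two_contractible (F S) x y & contract (F S) x y = F (i |: S)]) ->
  forall S, contracts_to (F S) (F setT).
Proof.
move=> step S; move: {2}#|~: S| (erefl #|~: S|) => k.
elim: k S => [|k IH] S cardS.
  suff -> : S = setT by exact: ct_refl.
  by apply/setP => x; rewrite inE; apply/negPn; have := card0_eq cardS x; rewrite !inE => ->.
have [i] : exists i, i \in ~: S by apply/set0Pn; rewrite -card_gt0 cardS.
rewrite inE => iS; have [x [y [xy tc contr]]] := step S i iS.
by apply: ct_step xy tc _; rewrite contr; apply: IH; exact: cardsC_setU1.
Qed.

Lemma notV3 (T : finType) (D : digraph T) v (e1 e2 : T * T) :
  [set p in de D | (p.1 == v) || (p.2 == v)] \subset [set e1; e2] -> v \notin V3 D.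
Proof.
move=> sub; rewrite inE negb_and -leqNgt; apply/orP; right.
by rewrite (leq_trans (subset_leq_card sub)) // cards2; case: (e1 != e2).
Qed.

Lemma two_contractible_bwd (T : finType) (D : digraph T) x y (Z : pred T) :
  Z y -> (forall u v, arc_minus D x y u v -> Z v -> Z u) ->
  (forall z, Z z -> z \notin V3 D) -> two_contractible D x y.
Proof.
move=> Zy closed low; rewrite /two_contractible (negbTE (low y Zy)) andbF /=.
apply/orP; right; apply/existsP => [[w /existsP [z /and4P[_ z3 _ zy]]]].
by have := low z (connect_bwd closed zy Zy); rewrite z3.
Qed.

Lemma two_contractible_fwd (T : finType) (D : digraph T) x y (Z : pred T) :
  Z x -> (forall u v, arc_minus D x y u v -> Z u -> Z v) ->
  (forall z, Z z -> z \notin V3 D) -> two_contractible D x y.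
Proof.
move=> Zx closed low; rewrite /two_contractible (negbTE (low x Zx)) /=.
apply/orP; right; apply/existsP => [[w /existsP [z /and4P[w3 _ xw _]]]].
by have := low w (connect_fwd closed xw Zx); rewrite w3.
Qed.

Lemma contract_sink_arc (T : finType) (D : digraph T) x y u w :
  (forall z, (y, z) \notin de D) ->
  ((u, w) \in de (contract D x y)) =
    (u != w) && (((u, w) \in de D) && (w != y) || (w == x) && ((u, y) \in de D)).
Proof.
move=> sink.
have tail_neq_y p q : (p, q) \in de D -> p != y.
  by move=> pq; apply: contraNneq (sink q) => <-.
apply/imsetP/idP => [[[p q]]|].
  rewrite inE /= => /andP[pq fneq] [-> ->].
  move: fneq; rewrite (negbTE (tail_neq_y _ _ pq)).
  case: (eqVneq q y) => [qy | q_neq_y] fneq; rewrite fneq /=.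
    by rewrite eqxx -qy pq orbT.
  by rewrite pq q_neq_y.
case/andP=> uw /orP[/andP[uwD w_neq_y] | /andP[/eqP w_x uy]].
  exists (u, w); last by rewrite /= (negbTE (tail_neq_y _ _ uwD)) (negbTE w_neq_y).
  by rewrite inE /= (negbTE (tail_neq_y _ _ uwD)) (negbTE w_neq_y) uwD.
rewrite w_x in uw *.
exists (u, y); last by rewrite /= (negbTE (tail_neq_y _ _ uy)) eqxx.
by rewrite inE /= (negbTE (tail_neq_y _ _ uy)) eqxx uy.
Qed.

Lemma digraph_ext (T : finType) (D1 D2 : digraph T) :
  dv D1 =i dv D2 -> (forall u v, ((u, v) \in de D1) = ((u, v) \in de D2)) -> D1 = D2.
Proof.
case: D1 D2 => [V1 E1] [V2 E2] /= /setP -> sameE.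
by congr Digraph; apply/setP => [[u v]]; exact: sameE.
Qed.

Inductive kind := kA | kY | kW | kB | kX | kV.


Definition kind_code (k : kind) : 'I_6 :=
  match k with
  | kA => @Ordinal 6 0 isT | kY => @Ordinal 6 1 isT | kW => @Ordinal 6 2 isT
  | kB => @Ordinal 6 3 isT | kX => @Ordinal 6 4 isT | kV => @Ordinal 6 5 isT
  end.
Definition kind_decode (i : 'I_6) : kind :=
  match val i with 0 => kA | 1 => kY | 2 => kW | 3 => kB | 4 => kX | _ => kV end.
Lemma kind_codeK : cancel kind_code kind_decode. Proof. by case. Qed.
HB.instance Definition _ := Finite.copy kind (can_type kind_codeK).

Section Gadget.
Variable n : nat.

Definition vertex : Type := kind * 'I_n.

(* The gadget after contracting A_i Y_i for i in S and X_j B_j for j in R: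
   the merged vertices keep the names A_i and X_j, and Y_i (i in S) and
   B_j (j in R) are gone. *)
Definition arc (S R : {set 'I_n}) (u v : vertex) : bool :=
  let: (k, i) := u in let: (l, j) := v in
  match k, l with
  | kA, kB => j \notin R
  | kA, kX => j \in R
  | kA, kY | kW, kY => (i == j) && (i \notin S)
  | kW, kA => (i == j) && (i \in S)
  | kX, kB => (i == j) && (i \notin R)
  | kX, kV => i == j
  | _, _ => false
  end.

Definition present (S R : {set 'I_n}) (v : vertex) : bool :=
  match v.1 with kY => v.2 \notin S | kB => v.2 \notin R | _ => true end.

Definition gadget (S R : {set 'I_n}) : digraph vertex :=
  Digraph [set v | present S R v] [set e | arc S R e.1 e.2].

Lemma arcE (S R : {set 'I_n}) (u v : vertex) : ((u, v) \in de (gadget S R)) = arc S R u v.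
Proof. by rewrite inE. Qed.

Lemma contract_Y (S R : {set 'I_n}) (i : 'I_n) : i \notin S ->
  contract (gadget S R) (kA, i) (kY, i) = gadget (i |: S) R.
Proof.
move=> iS; apply: digraph_ext => [[k j]|u w].
  rewrite !inE /present /=; case: k => //=.
  by rewrite in_setU1 negb_or andbC.
rewrite contract_sink_arc; last by case=> [[] j]; rewrite arcE.
rewrite !arcE; case: u w => [k1 j1] [k2 j2]; case: k1; case: k2 => /=.
all: rewrite ?xpair_eqE ?in_setU1 /= ?andbF ?andbT ?orbF //=.
all: case: (eqVneq j1 j2) => [<- | j12] /=; rewrite ?eqxx ?andbT ?andbF //=.
1,4: by apply/and3P => [[/eqP j2i /eqP j1i _]]; rewrite j1i j2i eqxx in j12.
1,3: by rewrite negb_or andbC.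
by case: (eqVneq j1 i) => [->|]; rewrite ?(negbTE iS) ?orbF.
Qed.

Lemma contract_X (S R : {set 'I_n}) (i : 'I_n) : i \notin R ->
  contract (gadget S R) (kX, i) (kB, i) = gadget S (i |: R).
Proof.
move=> iR; apply: digraph_ext => [[k j]|u w].
  rewrite !inE /present /=; case: k => //=.
  by rewrite in_setU1 negb_or andbC.
rewrite contract_sink_arc; last by case=> [[] j]; rewrite arcE.
rewrite !arcE; case: u w => [k1 j1] [k2 j2]; case: k1; case: k2 => /=.
all: rewrite ?xpair_eqE ?in_setU1 /= ?andbF ?andbT ?orbF //=.
- by rewrite negb_or andbC.
- by case: (eqVneq j2 i) => [->|]; rewrite ?iR ?orbF ?orbT.
- by case: (eqVneq j1 j2) => [<-|_] /=; rewrite ?eqxx ?negb_or 1?andbC.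
- by apply/and4P => [[j12 /eqP j2i /eqP j1i _]]; rewrite j1i j2i eqxx in j12.
Qed.

Lemma Y_notV3 (S R : {set 'I_n}) (i : 'I_n) : (kY, i) \notin V3 (gadget S R).
Proof.
apply: (@notV3 _ _ _ ((kA, i), (kY, i)) ((kW, i), (kY, i))).
apply/subsetP => [[[k1 j1] [k2 j2]]]; rewrite !inE /= !xpair_eqE.
case: k1; case: k2 => //=; rewrite ?andbF ?andbT ?orbF //=.
all: by case/andP => /andP[/eqP -> _] ->.
Qed.

Lemma W_notV3 (S R : {set 'I_n}) (i : 'I_n) : i \notin S -> (kW, i) \notin V3 (gadget S R).
Proof.
move=> iS; apply: (@notV3 _ _ _ ((kW, i), (kY, i)) ((kW, i), (kY, i))).
apply/subsetP => [[[k1 j1] [k2 j2]]]; rewrite !inE /= !xpair_eqE.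
case: k1; case: k2 => //=; rewrite ?andbF ?andbT ?orbF //=.
  by case/andP => /andP[_ jS] /eqP ji; move: iS; rewrite -ji jS.
by case/andP => /andP[/eqP <- _] ->.
Qed.

Lemma X_notV3 (S R : {set 'I_n}) (i : 'I_n) : i \notin R -> (kX, i) \notin V3 (gadget S R).
Proof.
move=> iR; apply: (@notV3 _ _ _ ((kX, i), (kB, i)) ((kX, i), (kV, i))).
apply/subsetP => [[[k1 j1] [k2 j2]]]; rewrite !inE /= !xpair_eqE.
case: k1; case: k2 => //=; rewrite ?andbF ?andbT ?orbF //=.
- by case/andP => jR /eqP ji; move: iR; rewrite -ji jR.
- by case/andP => /andP[/eqP <- _] ->.
- by case/andP => /eqP <- ->.
Qed.

Lemma V_notV3 (S R : {set 'I_n}) (i : 'I_n) : (kV, i) \notin V3 (gadget S R).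
Proof.
apply: (@notV3 _ _ _ ((kX, i), (kV, i)) ((kX, i), (kV, i))).
apply/subsetP => [[[k1 j1] [k2 j2]]]; rewrite !inE /= !xpair_eqE.
case: k1; case: k2 => //=; rewrite ?andbF ?andbT ?orbF //=.
by case/andP => /eqP <- ->.
Qed.

(* Only W_i leads into Y_i besides A_i, and only V_i is reached from X_i
   besides B_i: both arcs A_i Y_i and X_i B_i are 2-contractible. *)
Lemma two_contractible_AY (S R : {set 'I_n}) (i : 'I_n) : i \notin S ->
  two_contractible (gadget S R) (kA, i) (kY, i).
Proof.
move=> iS; apply: (@two_contractible_bwd _ _ _ _
  (fun v => (v == (kY, i)) || (v == (kW, i)))).
- by rewrite eqxx.
- move=> [k1 j1] [k2 j2]; rewrite /arc_minus arcE !xpair_eqE.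
  case: k1; case: k2 => //=; rewrite ?orbF ?andbF ?andbT //=.
  + by move=> /andP[/andP[/eqP -> _]] ne /eqP j2i; rewrite j2i eqxx in ne.
  + by move=> /andP[/eqP -> _] /eqP ->.
- by move=> z /orP[] /eqP ->; [exact: Y_notV3 | exact: W_notV3].
Qed.

Lemma two_contractible_XB (S R : {set 'I_n}) (i : 'I_n) : i \notin R ->
  two_contractible (gadget S R) (kX, i) (kB, i).
Proof.
move=> iR; apply: (@two_contractible_fwd _ _ _ _
  (fun v => (v == (kX, i)) || (v == (kV, i)))).
- by rewrite eqxx.
- move=> [k1 j1] [k2 j2]; rewrite /arc_minus arcE !xpair_eqE.
  case: k1; case: k2 => //=; rewrite ?orbF ?andbF ?andbT //=.
  + by move=> /andP[/andP[/eqP <- _] ne] /eqP j1i; rewrite j1i eqxx in ne.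
  + by move=> /eqP <-.
- by move=> z /orP[] /eqP ->; [exact: X_notV3 | exact: V_notV3].
Qed.

Lemma gadget_wf (S R : {set 'I_n}) : wf (gadget S R).
Proof.
apply/andP; split; last by apply/forallP => [[k j]]; rewrite arcE; case: k.
apply/subsetP => [[[k1 j1] [k2 j2]]]; rewrite arcE !inE /present /=.
by case: k1; case: k2 => //=; rewrite ?andbT //; case/andP => /eqP ->.
Qed.

Definition Jgraph : digraph vertex := gadget set0 set0.
Definition Hgraph : digraph vertex := gadget setT setT.

Lemma H_minor_of_J : dtop_minor Hgraph Jgraph.
Proof.
exists Jgraph, Hgraph; split; first by rewrite /subgraph gadget_wf !subxx.
split; last by exists id; split => //; rewrite imset_id.
apply: (@ct_trans _ _ (gadget setT set0)).
  apply: (@contracts_to_full _ _ (fun S => gadget S set0) _ set0) => S i iS.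
  exists (kA, i), (kY, i); split; [by rewrite arcE /= eqxx iS | exact: two_contractible_AY | exact: contract_Y].
apply: (@contracts_to_full _ _ (fun R => gadget setT R) _ set0) => R i iR.
exists (kX, i), (kB, i); split; [by rewrite arcE /= eqxx iR | exact: two_contractible_XB | exact: contract_X].
Qed.

(* In J every arc leaves a vertex of kind A, W or X and enters one of kind
   B, Y or V, so J has no directed path of length two. *)
Lemma J_no_2path (u v w : vertex) : (u, v) \in de Jgraph -> (v, w) \in de Jgraph -> False.
Proof.
case: u v w => [k1 j1] [k2 j2] [k3 j3]; rewrite !arcE.
by case: k1; case: k2; case: k3 => //=; rewrite inE ?andbF.
Qed.

Lemma dbw_J : 0 < n -> dbw Jgraph = 0.
Proof.
move=> n_gt0; apply: dbw_no_2path J_no_2path; pose i := Ordinal n_gt0.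
have two : [set ((kA, i), (kY, i)); ((kW, i), (kY, i))] \subset de Jgraph.
  by apply/subsetP => e; rewrite !inE => /orP[] /eqP -> /=; rewrite inE.
by apply: leq_trans (subset_leq_card two); rewrite cards2.
Qed.


Definition EH : {set vertex * vertex} := de Hgraph.

Definition boundary (Y : {set vertex * vertex}) : {set vertex} :=
  SV EH Y :|: SV EH (EH :\: Y).

Lemma arc_AX i j : ((kA, i), (kX, j)) \in EH.
Proof. by rewrite /EH /Hgraph arcE /= inE. Qed.
Lemma arc_WA i : ((kW, i), (kA, i)) \in EH.
Proof. by rewrite /EH /Hgraph arcE /= eqxx inE. Qed.
Lemma arc_XV j : ((kX, j), (kV, j)) \in EH.
Proof. by rewrite /EH /Hgraph arcE /= eqxx. Qed.

(* Collapsing the pendant arcs W_i A_i and X_j V_j onto A_i and X_j maps the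
   arcs of H injectively into pairs of vertices of kinds A and X. *)
Definition rep (v : vertex) : vertex :=
  match v.1 with kW => (kA, v.2) | kV => (kX, v.2) | _ => v end.
Definition rep_arc (e : vertex * vertex) : vertex * vertex := (rep e.1, rep e.2).

Lemma rep_arc_inj : {in EH &, injective rep_arc}.
Proof.
move=> [[k1 j1] [k2 j2]] [[k3 j3] [k4 j4]]; rewrite /EH /Hgraph !arcE /rep_arc /rep /=.
by case: k1; case: k2 => //=; case: k3; case: k4 => //=; rewrite ?inE ?andbF // => _ _ [-> ->].
Qed.

Lemma row_card (C : {set vertex}) (k : kind) : (forall i, (k, i) \in C) -> n <= #|C|.
Proof.
move=> row; apply: (@leq_trans #|[set (k, i) | i : 'I_n]|).
  by rewrite card_imset ?card_ord // => ? ? [].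
by apply: subset_leq_card; apply/subsetP => v /imsetP[i _ ->].
Qed.

Section Cut.
Variables (Y : {set vertex * vertex}) (i0 j0 : 'I_n).
Hypotheses (Ai0 : (kA, i0) \notin boundary Y) (Xj0 : (kX, j0) \notin boundary Y).
Let s := ((kA, i0), (kX, j0)) \in Y.

(* Through the non-boundary vertices A_i0 and X_j0, every pendant arc W_i A_i
   or X_j V_j and every arc A_i X_j at a non-boundary vertex lies on side s. *)

Lemma side_WA i : (kA, i) \notin boundary Y -> (((kW, i), (kA, i)) \in Y) = s.
Proof.
move=> Ai; rewrite (boundary_uniform (arc_WA i) (arc_AX i j0) Ai).
rewrite (boundary_uniform (arc_AX i j0) (arc_XV j0) Xj0).
by rewrite -(boundary_uniform (arc_AX i0 j0) (arc_XV j0) Xj0).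
Qed.

Lemma side_XV j : (kX, j) \notin boundary Y -> (((kX, j), (kV, j)) \in Y) = s.
Proof.
move=> Xj; rewrite -(boundary_uniform (arc_AX i0 j) (arc_XV j) Xj).
rewrite -(boundary_uniform (arc_WA i0) (arc_AX i0 j) Ai0).
by rewrite (boundary_uniform (arc_WA i0) (arc_AX i0 j0) Ai0).
Qed.

Lemma side_AX i j : ((kA, i) \notin boundary Y) || ((kX, j) \notin boundary Y) ->
  (((kA, i), (kX, j)) \in Y) = s.
Proof.
case/orP => [Ai | Xj].
  by rewrite -(boundary_uniform (arc_WA i) (arc_AX i j) Ai) side_WA.
by rewrite (boundary_uniform (arc_AX i j) (arc_XV j) Xj) side_XV.
Qed.

Lemma off_side_in_boundary e : e \in EH -> (e \in Y) != s ->
  rep_arc e \in setX (boundary Y) (boundary Y).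
Proof.
case: e => [[k1 j1] [k2 j2]]; rewrite /EH /Hgraph arcE /rep_arc /rep in_setX /=.
case: k1; case: k2 => //=; rewrite ?in_setT ?andbT ?andbF //=.
- move=> _ off; apply/andP; split; apply/negPn/negP => notC.
  + by rewrite side_AX ?notC ?eqxx in off.
  + by rewrite side_AX ?notC ?orbT ?eqxx in off.
- move=> /eqP <- off; rewrite andbb; apply/negPn/negP => Aj.
  by rewrite side_WA ?eqxx in off.
- move=> /eqP <- off; rewrite andbb; apply/negPn/negP => Xj.
  by rewrite side_XV ?eqxx in off.
Qed.

Lemma card_off_side (O : {set vertex * vertex}) : O \subset EH ->
  {in O, forall e, (e \in Y) != s} -> #|O| <= #|boundary Y| * #|boundary Y|.
Proof.
move=> sub off; rewrite -cardsX -(card_in_imset (f := rep_arc)); last first.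
  by move=> a b aO bO; apply: rep_arc_inj; apply: (subsetP sub).
apply: subset_leq_card; apply/subsetP => x /imsetP[e eO ->].
by apply: off_side_in_boundary; [exact: (subsetP sub) | exact: off].
Qed.

End Cut.

Lemma H_cut (Y : {set vertex * vertex}) : Y \subset EH ->
  [\/ n <= #|boundary Y|, #|Y| <= #|boundary Y| * #|boundary Y|
     | #|EH :\: Y| <= #|boundary Y| * #|boundary Y|].
Proof.
move=> sub.
have [allA | /forallPn[i0 /negPf Ai0]] := boolP [forall i, (kA, i) \in boundary Y].
  by apply: Or31; apply: (@row_card _ kA) => i; exact: (forallP allA).
have [allX | /forallPn[j0 /negPf Xj0]] := boolP [forall j, (kX, j) \in boundary Y].
  by apply: Or31; apply: (@row_card _ kX) => j; exact: (forallP allX).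
have [s|s] := boolP (((kA, i0), (kX, j0)) \in Y).
  apply: Or33; apply: (card_off_side (negbT Ai0) (negbT Xj0)); first exact: subsetDl.
  by move=> e; rewrite in_setD s => /andP[/negbTE ->].
apply: Or32; apply: (card_off_side (negbT Ai0) (negbT Xj0)) => // e eY.
by rewrite eY (negbTE s).
Qed.

(* The arcs A_i X_j alone give H at least n^2 arcs. *)
Lemma EH_card : n * n <= #|EH|.
Proof.
apply: (@leq_trans #|[set ((kA, p.1), (kX, p.2)) | p : 'I_n * 'I_n]|).
  by rewrite card_imset ?cardsT ?card_prod ?card_ord // => [[a b] [c d]] /= [-> ->].
by apply/subset_leq_card/subsetP => e /imsetP[p _ ->]; exact: arc_AX.
Qed.

(* H has large directed branch-width: in a decomposition of width at most
   K < n every tree edge has a side with at most K^2 arcs (H_cut), whereas a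
   balanced edge has two sides with more than K^2 arcs as soon as
   n^2 > 3 K^2 + 1. *)
Lemma dbw_H_large (K : nat) : 2 * K + 2 <= n -> K < dbw Hgraph.
Proof.
move=> n_large; rewrite ltnNge; apply/negP => small.
have many : 3 * (K * K) + 1 < #|EH| by apply: leq_trans EH_card; nia.
have [[E0 | [U [t [beta [tree inj onto width]]]]] _] := dbw_spec (leq_ltn_trans (leq_addl _ _) many).
  by move: many; rewrite /EH E0 cards0.
have leaves_card : #|leaves t| = #|EH| by rewrite /EH -onto card_in_imset.
have [|a [b [tab big_side big_rest]]] := @balanced_edge _ _ tree (K * K).
  by rewrite leaves_card.
set Y := beta @: side t a b.
have sideL : side t a b \subset leaves t by apply/subsetP => u; rewrite inE => /andP[].
have Y_sub : Y \subset EH by rewrite /EH -onto imsetS.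
have card_Y : #|Y| = #|side t a b|.
  by apply: card_in_imset => x y /(subsetP sideL) xl /(subsetP sideL); exact: inj.
have bd_small : #|boundary Y| <= K by apply: leq_trans (width a b tab) small.
have sq_small : #|boundary Y| * #|boundary Y| <= K * K by exact: leq_mul.
case: (H_cut Y_sub) => [bd_n | Y_small | rest_small].
- by move: (leq_trans bd_n bd_small); lia.
- by move: big_side; rewrite -card_Y ltnNge (leq_trans Y_small sq_small).
- move: big_rest; rewrite leaves_card -card_Y ltnNge.
  by rewrite -(setIidPr Y_sub) -cardsD (leq_trans rest_small sq_small).
Qed.

End Gadget.

Theorem mainTheorem12 :
  ~ exists g : nat -> nat,
      forall (T : finType) (J : digraph T), wf J ->
      forall (T' : finType) (H : digraph T'), wf H ->
        dtop_minor H J -> dbw H <= g (dbw J).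
Proof.
case=> g bounded; set K := g 0; set n := 2 * K + 2.
have := bounded _ _ (gadget_wf set0 set0) _ _ (gadget_wf setT setT) (H_minor_of_J n).
have n_gt0 : 0 < n by rewrite /n addn2.
rewrite dbw_J // -/K => dbw_H_small.
by have := dbw_H_large (leqnn n); rewrite ltnNge dbw_H_small.
Qed.
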